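(* Let $m\ge 2$, let $K\ne\Delta_{[m]}$ be a simplicial complex on $[m]$ and let $i\in[m]$ with $i\in V(K)$ and $i'\in V(K^\vee)$. Then $\mathrm{Bier}(K)$ is a weak suspension with vertex pair $\{i,i'\}$ if and only if $K$ is a weak cone with apex $i$ and $K^\vee$ is a weak cone with apex $i'$.
   Context: A simplicial complex $K$ on $[m]=\{1,\dots,m\}$ is a nonempty family of subsets of $[m]$ closed under taking subsets; $V(K)=\{i:\{i\}\in K\}$. $\Delta_{[m]}=2^{[m]}$. Let $[m']=\{1',\dots,m'\}$ be a disjoint copy of $[m]$, $I'=\{i':i\in I\}$. For $K\ne\Delta_{[m]}$ the Alexander dual $K^\vee$ is the complex on $[m']$ with $J'\in K^\vee$ iff $[m]\setminus J\notin K$. The Bier sphere $\mathrm{Bier}(K)$ is the complex on $[m]\sqcup[m']$ with faces $I\sqcup J'$, $I\in K$, $J'\in K^\vee$, $I\cap J=\varnothing$. A complex $L$ is a weak cone with apex $a\in V(L)$ if $\{a,v\}\in L$ for all $v\in V(L)\setminus\{a\}$. $L$ is a weak suspension with vertex pair $\{a,b\}$ if $a,b\in V(L)$ are distinct, $\{a,b\}\notin L$, and each of $a,b$ forms an edge of $L$ with every vertex of $V(L)\setminus\{a,b\}$. *)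

From mathcomp Require Import all_boot.
Set Implicit Arguments. Unset Strict Implicit. Unset Printing Implicit Defensive.

(* Vertex set [m] is modelled by 'I_m (0-indexed); the disjoint union
   [m] ⊔ [m'] is the sum type 'I_m + 'I_m, with i ↦ inl i and i' ↦ inr i. *)

Section Complexes.
Variable T : finType.

Definition simplicial_complex (K : {set {set T}}) : Prop :=
  K != set0 /\ forall A B : {set T}, A \in K -> B \subset A -> B \in K.

Definition vertices (K : {set {set T}}) : {set T} := [set v | [set v] \in K].

Definition full_simplex : {set {set T}} := [set: {set T}].

Definition weak_cone (L : {set {set T}}) (a : T) : Prop :=
  a \in vertices L /\
  forall v, v \in vertices L -> v != a -> [set a; v] \in L.

Definition weak_suspension (L : {set {set T}}) (a b : T) : Prop :=
  [/\ a \in vertices L, b \in vertices L, a != b, [set a; b] \notin L &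
   forall v, v \in vertices L -> v != a -> v != b ->
     [set a; v] \in L /\ [set b; v] \in L].
End Complexes.

(* Alexander dual of K on [m]; it lives on the copy [m'], which we identify
   with 'I_m via i' ↦ i:  J' ∈ K^∨  iff  [m] \ J ∉ K. *)
Definition alex_dual (m : nat) (K : {set {set 'I_m}}) : {set {set 'I_m}} :=
  [set J | ~: J \notin K].

Definition bier (m : nat) (K : {set {set 'I_m}}) : {set {set ('I_m + 'I_m)}} :=
  [set ((@inl 'I_m 'I_m) @: I) :|: ((@inr 'I_m 'I_m) @: J)
   | I : {set 'I_m} in K, J : {set 'I_m} in alex_dual K & [disjoint I & J]].

(* A face of Bier(K) is a set inl@:I ∪ inr@:J, and it determines I and J;
   so it is a face iff I ∈ K, J ∈ K^∨ and I ∩ J = ∅.  Since ∅ lies in both K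
   and K^∨ (the latter because K ≠ Δ), this identifies the vertices of Bier(K)
   with those of K and of K^∨, the edges {v, w} and {v', w'} with the edges of
   K and of K^∨, and shows that {v, w'} is an edge exactly when v, w' are
   vertices and v ≠ w.  In particular {i, i'} is never an edge, while {i, v'}
   and {i', v} are edges for all vertices v ≠ i of K^∨, resp. K, so the
   weak-suspension condition reduces to the two weak-cone conditions. *)

From mathcomp Require Import all_boot.

Set Implicit Arguments. Unset Strict Implicit. Unset Printing Implicit Defensive.

Lemma in_vertices (T : finType) (L : {set {set T}}) (v : T) :
  (v \in vertices L) = ([set v] \in L).
Proof. by rewrite inE. Qed.

Lemma simplicial_complex_set0 (T : finType) (K : {set {set T}}) :
  simplicial_complex K -> set0 \in K.
Proof. by case=> /set0Pn[A KA] Kdown; apply: Kdown KA (sub0set A). Qed.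

Lemma simplicial_complex_setT (T : finType) (K : {set {set T}}) :
  simplicial_complex K -> K != full_simplex T -> setT \notin K.
Proof.
case=> _ Kdown; apply: contra => KT; apply/eqP/setP => A.
by rewrite inE (Kdown _ _ KT (subsetT A)).
Qed.

Section BierSphere.
Variables (m : nat) (K : {set {set 'I_m}}).
Implicit Types (a b x : 'I_m) (I J : {set 'I_m}).

Definition bier_face I J : {set 'I_m + 'I_m} := inl @: I :|: inr @: J.

Lemma inl_bier_face I J x : (inl x \in bier_face I J) = (x \in I).
Proof.
rewrite inE (mem_imset _ _ inl_inj).
have /negbTE-> : inl x \notin inr @: J by apply/imsetP => -[].
by rewrite orbF.
Qed.

Lemma inr_bier_face I J x : (inr x \in bier_face I J) = (x \in J).
Proof.
rewrite inE (mem_imset _ _ inr_inj).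
by have /negbTE-> : inr x \notin inl @: I by apply/imsetP => -[].
Qed.

Lemma bier_face_inj I J I' J' :
  bier_face I J = bier_face I' J' -> I = I' /\ J = J'.
Proof.
move=> eIJ; split; apply/setP => x.
- by rewrite -(inl_bier_face I J) eIJ inl_bier_face.
- by rewrite -(inr_bier_face I J) eIJ inr_bier_face.
Qed.

Lemma mem_bier_face I J :
  (bier_face I J \in bier K) =
  [&& I \in K, J \in alex_dual K & [disjoint I & J]].
Proof.
apply/imset2P/and3P => [[I' J' KI'] | [KI KJ dIJ]].
- by rewrite inE => /andP[KJ' dIJ'] /bier_face_inj[-> ->].
- by exists I J => //; rewrite inE KJ.
Qed.

Lemma bier_face_set1l a : [set inl a] = bier_face [set a] set0.
Proof. by rewrite /bier_face imset_set1 imset0 setU0. Qed.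

Lemma bier_face_set1r a : [set inr a] = bier_face set0 [set a].
Proof. by rewrite /bier_face imset_set1 imset0 set0U. Qed.

Lemma bier_face_set2l a b : [set inl a; inl b] = bier_face [set a; b] set0.
Proof. by rewrite /bier_face imsetU1 imset_set1 imset0 setU0. Qed.

Lemma bier_face_set2r a b : [set inr a; inr b] = bier_face set0 [set a; b].
Proof. by rewrite /bier_face imsetU1 imset_set1 imset0 set0U. Qed.

Lemma bier_face_set2lr a b : [set inl a; inr b] = bier_face [set a] [set b].
Proof. by rewrite /bier_face !imset_set1. Qed.

Hypotheses (K0 : set0 \in K) (KD0 : set0 \in alex_dual K).

Lemma inl_vertex_bier a : (inl a \in vertices (bier K)) = (a \in vertices K).
Proof.
by rewrite !in_vertices bier_face_set1l mem_bier_face KD0 disjoints1 in_set0 andbT.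
Qed.

Lemma inr_vertex_bier a :
  (inr a \in vertices (bier K)) = (a \in vertices (alex_dual K)).
Proof.
by rewrite !in_vertices bier_face_set1r mem_bier_face K0 -setI_eq0 set0I eqxx andbT.
Qed.

Lemma inl_edge_bier a b : ([set inl a; inl b] \in bier K) = ([set a; b] \in K).
Proof.
by rewrite bier_face_set2l mem_bier_face KD0 -setI_eq0 setI0 eqxx /= andbT.
Qed.

Lemma inr_edge_bier a b :
  ([set inr a; inr b] \in bier K) = ([set a; b] \in alex_dual K).
Proof.
by rewrite bier_face_set2r mem_bier_face K0 -setI_eq0 set0I eqxx andbT.
Qed.

Lemma inlr_edge_bier a b :
  ([set inl a; inr b] \in bier K) =
  [&& a \in vertices K, b \in vertices (alex_dual K) & a != b].
Proof.
by rewrite bier_face_set2lr mem_bier_face disjoints1 in_set1 !in_vertices.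
Qed.

End BierSphere.

Theorem mainTheorem4 (m : nat) (hm : 2 <= m) (K : {set {set 'I_m}})
  (hK : simplicial_complex K) (hKD : K != full_simplex 'I_m)
  (i : 'I_m) (hi : i \in vertices K) (hi' : i \in vertices (alex_dual K)) :
  weak_suspension (bier K) (inl i) (inr i) <->
  weak_cone K i /\ weak_cone (alex_dual K) i.
Proof.
have K0 := simplicial_complex_set0 hK.
have KD0 : set0 \in alex_dual K.
  by rewrite inE setC0 (simplicial_complex_setT hK hKD).
split.
- case=> _ _ _ _ susp; split; split=> // v Vv vi.
  + have := susp (inl v); rewrite inl_vertex_bier // (inj_eq inl_inj).
    by case/(_ Vv vi isT); rewrite inl_edge_bier.
  + have := susp (inr v); rewrite inr_vertex_bier // (inj_eq inr_inj).
    by case/(_ Vv isT vi) => _; rewrite inr_edge_bier.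
- case=> -[_ coneK] [_ coneKD]; split.
  + by rewrite inl_vertex_bier.
  + by rewrite inr_vertex_bier.
  + by [].
  + by rewrite inlr_edge_bier // eqxx !andbF.
  + case=> v.
    * rewrite inl_vertex_bier // (inj_eq inl_inj) => Vv vi _.
      rewrite inl_edge_bier // (setUC [set inr i]) inlr_edge_bier // Vv hi' vi.
      by split=> //; apply: coneK.
    * rewrite inr_vertex_bier // (inj_eq inr_inj) => Vv _ vi'.
      rewrite inr_edge_bier // inlr_edge_bier // hi Vv (eq_sym i) vi'.
      by split=> //; apply: coneKD.
Qed.
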